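(* Let $G$ be an $(n,n,p_s,p_d)$-two-island network with groups $V_1,V_2$ and degree of homophily $h_G=p_s/p_d$, and let the dual opinions evolve according to the dynamics in the context with common resilience $\phi\in(0,1)$, common bias $b$ with $\frac{2}{\phi(h_G-1)+2}\le b<1$, and the symmetric initial condition $x_i(0)=x_0\in(\tfrac12,1)$, $y_i(0)=y_0\in[\tfrac12,x_0]$ for $i\in V_1$, $x_j(0)=1-x_0$, $y_j(0)=1-y_0$ for $j\in V_2$. Let $i\in V_1$. If there exists $T>0$ such that $x_i(t)<\hat x(\phi,h_G,b)$ for all $t\ge T$, then there exists $\mathcal T>T$ such that $x_i(t)$ and $y_i(t)$ are monotonic for $t\ge\mathcal T$, and $$\lim_{t\to\infty}x_i(t)=\hat x(\phi,h_G,b),\qquad \lim_{t\to\infty}y_i(t)=\frac{\phi(h_G+1)\hat x(\phi,h_G,b)+1-\phi}{\phi h_G+2-\phi}.$$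
   Context: Let $n\ge 1$ and $p_s,p_d\in(0,1)$ with $p_s>p_d$ and $np_s,np_d$ positive integers. An $(n,n,p_s,p_d)$-two-island network is an undirected graph (no self-loops) with vertex set $V=V_1\cup V_2$, $V_1\cap V_2=\emptyset$, $|V_1|=|V_2|=n$, such that each node of $V_1$ has exactly $np_s$ neighbours in $V_1$ and $np_d$ neighbours in $V_2$, and each node of $V_2$ has exactly $np_s$ neighbours in $V_2$ and $np_d$ neighbours in $V_1$. Its degree of homophily is $h_G=p_s/p_d>1$. Let $w_{ij}\in\{0,1\}$ be the adjacency matrix, $N_i$ the set of neighbours of $i$, and $d_i=\sum_{j\in N_i}w_{ij}$. Dual opinions dynamics: each $i\in V$ has $x_i(t),y_i(t)\in[0,1]$, $t=0,1,2,\dots$, updated by $$x_i(t+1)=\frac{x_i(t)^{b}s_i(t)}{x_i(t)^{b}s_i(t)+(1-x_i(t))^{b}(d_i-s_i(t))},\qquad y_i(t+1)=\phi\, x_i(t+1)+(1-\phi)\hat y_{i,avg}(t),$$ with $s_i(t)=\sum_{j\in N_i}w_{ij}y_j(t)$ and $\hat y_{i,avg}(t)=\sum_{j\in N_i}\frac{w_{ij}}{d_i}y_j(t)$. For $0<b<1$ define $g(x,b)=\frac{x^{1-b}-(1-x)^{1-b}}{x(1-x)^{1-b}-(1-x)x^{1-b}}$ for $x\in(\tfrac12,1)$ and $g(\tfrac12,b)=\frac2b-2$. $\hat x(\phi,h_G,b)$ denotes the solution $x\in[\tfrac12,1)$ of $g(x,b)=\phi(h_G-1)$ (it lies in $(\tfrac12,1)$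 when $b>\frac{2}{\phi(h_G-1)+2}$ and equals $\tfrac12$ when $b=\frac{2}{\phi(h_G-1)+2}$). *)

From HB Require Import structures.
From mathcomp Require Import all_boot all_order all_algebra.
From mathcomp Require Import all_classical all_reals all_analysis.
Set Implicit Arguments. Unset Strict Implicit. Unset Printing Implicit Defensive.
Import Order.TTheory GRing.Theory Num.Theory.
Import numFieldNormedType.Exports.
Local Open Scope ring_scope.

(* An (n,n,p_s,p_d)-two-island network on a finite vertex type T, given by a
   symmetric irreflexive adjacency relation e; V1 is the first group and its
   complement ~: V1 the second one; ks = n p_s and kd = n p_d. *)
Definition two_island (T : finType) (e : rel T) (V1 : {set T}) (n ks kd : nat) : Prop :=
  [/\ symmetric e, irreflexive e, #|V1| = n /\ #|~: V1| = n,
      (forall i, i \in V1 ->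
         #|[set j in V1 | e i j]| = ks /\ #|[set j in ~: V1 | e i j]| = kd) &
      (forall i, i \in ~: V1 ->
         #|[set j in ~: V1 | e i j]| = ks /\ #|[set j in V1 | e i j]| = kd)].

Definition deg (T : finType) (e : rel T) (R : realType) (i : T) : R :=
  #|[set j | e i j]|%:R.

Definition ssum (R : realType) (T : finType) (e : rel T) (y : T -> R) (i : T) : R :=
  \sum_(j | e i j) y j.

Definition dual_dynamics (R : realType) (T : finType) (e : rel T) (phi b : R)
  (x y : nat -> T -> R) : Prop :=
  forall (t : nat) (i : T),
    let s := ssum e (y t) i in
    let d := deg e R i in
    x t.+1 i = (x t i `^ b * s) / (x t i `^ b * s + (1 - x t i) `^ b * (d - s)) /\
    y t.+1 i = phi * x t.+1 i + (1 - phi) * (s / d).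

Definition gfun (R : realType) (x b : R) : R :=
  if x == 2^-1 then 2 / b - 2
  else (x `^ (1 - b) - (1 - x) `^ (1 - b)) /
       (x * (1 - x) `^ (1 - b) - (1 - x) * x `^ (1 - b)).

Definition monotone_from (R : realType) (u : nat -> R) (N : nat) : Prop :=
  (forall t, (N <= t)%N -> u t <= u t.+1) \/ (forall t, (N <= t)%N -> u t.+1 <= u t).

From HB Require Import structures.
From mathcomp Require Import all_boot all_order all_algebra.
From mathcomp Require Import all_classical all_reals all_analysis.
From mathcomp Require Import ring lra.
Import Order.TTheory GRing.Theory Num.Theory.
Import numFieldNormedType.Exports.
Set Implicit Arguments. Unset Strict Implicit. Unset Printing Implicit Defensive.
Local Open Scope classical_set_scope.
Local Open Scope ring_scope.

(* By symmetry every node of V1 carries a common pair (X_t, Y_t) and every node of V2 the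
   pair (1 - X_t, 1 - Y_t), so the dynamics reduces to a planar system whose x-update
   satisfies logit X_{t+1} = b logit X_t + logit (mean opinion of the neighbours).
   Both updates are nondecreasing in both variables, which makes (X_t, Y_t) eventually
   monotone, hence convergent, and the limit (x, y) is a fixed point: y = yfix x and
   (1 - b) logit x = psi_m (logit x), where psi_m s = ln (1 + m e^s) - ln (m + e^s) and
   m = 1 + phi (h_G - 1). As psi_m is concave on [0, +oo) and vanishes at 0, psi_m s / s
   is strictly decreasing; hence every x in (1/2, x^) is a strict sub-solution. This
   yields a barrier x_w > 1/2 below which X_t never falls, and rules out any limit in
   (1/2, x^); with X_t < x^ the limit must be x^. *)

Lemma ind_from (P : nat -> Prop) (T : nat) :
  P T -> (forall t, (T <= t)%N -> P t -> P t.+1) -> forall t, (T <= t)%N -> P t.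
Proof.
move=> PT IH t /subnKC <-; elim: (t - T)%N => [|k IHk]; first by rewrite addn0.
by rewrite addnS; apply: IH => //; exact: leq_addr.
Qed.

Section Logit.
Context {R : realType}.
Implicit Types x y : R.

Definition logit x := ln x - ln (1 - x).

Lemma logit_half : logit 2^-1 = 0.
Proof. by rewrite /logit (_ : 1 - 2^-1 = 2^-1) ?subrr //; field. Qed.

Lemma logit_homo : {in `]0, 1[ &, {homo logit : x y / x < y}}.
Proof.
move=> x y; rewrite !in_itv /= => /andP[x0 x1] /andP[y0 y1] xy.
have : ln x < ln y by rewrite ltr_ln ?posrE.
have : ln (1 - y) < ln (1 - x) by rewrite ltr_ln ?posrE ?subr_gt0 // ltrD2l ltrN2.
rewrite /logit; lra.
Qed.

Lemma ler_logit x y : 0 < x < 1 -> 0 < y < 1 -> (logit x <= logit y) = (x <= y).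
Proof. by move=> x01 y01; apply: (le_mono_in logit_homo); rewrite in_itv. Qed.

Lemma ltr_logit x y : 0 < x < 1 -> 0 < y < 1 -> (logit x < logit y) = (x < y).
Proof. by move=> x01 y01; rewrite !ltNge ler_logit. Qed.

Lemma logit_gt0 x : 0 < x < 1 -> (0 < logit x) = (2^-1 < x).
Proof. by move=> x01; rewrite -logit_half ltr_logit //; apply/andP; split; lra. Qed.

Lemma logit_cvg (u : nat -> R) (l : R) : 0 < l < 1 -> u @ \oo --> l ->
  (fun t => logit (u t)) @ \oo --> logit l.
Proof.
move=> /andP[l0 l1] ul; apply: cvgB; first exact: continuous_cvg (continuous_ln l0) ul.
apply: (continuous_cvg _ (continuous_ln _)); first by rewrite subr_gt0.
by apply: cvgB => //; exact: cvg_cst.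
Qed.

End Logit.

Section BiasedUpdate.
Context {R : realType}.
Variable b : R.
Implicit Types x a s d : R.

(* The x-update of the dynamics, [a] being the mean opinion [s_i / d_i] of the neighbours. *)
Definition biased_update x a := x `^ b * a / (x `^ b * a + (1 - x) `^ b * (1 - a)).

Lemma biased_update_scale x s d : d != 0 ->
  x `^ b * s / (x `^ b * s + (1 - x) `^ b * (d - s)) = biased_update x (s / d).
Proof.
move=> d0; rewrite /biased_update.
set A := x `^ b * s + (1 - x) `^ b * (d - s).
have -> : x `^ b * (s / d) + (1 - x) `^ b * (1 - s / d) = A / d by rewrite /A; field.
have [->|A0] := eqVneq A 0; first by rewrite mul0r !invr0 !mulr0.
by field; apply/andP.
Qed.

Lemma biased_update_in01 x a : 0 < x < 1 -> 0 < a < 1 -> 0 < biased_update x a < 1.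
Proof.
move=> /andP[x0 x1] /andP[a0 a1].
have p : 0 < x `^ b * a by rewrite mulr_gt0 ?powR_gt0.
have q : 0 < (1 - x) `^ b * (1 - a) by rewrite mulr_gt0 ?powR_gt0 ?subr_gt0.
by rewrite /biased_update divr_gt0 ?addr_gt0 //= ltr_pdivrMr ?addr_gt0 // mul1r ltrDl.
Qed.

Lemma logit_biased_update x a : 0 < x < 1 -> 0 < a < 1 ->
  logit (biased_update x a) = b * logit x + logit a.
Proof.
move=> /andP[x0 x1] /andP[a0 a1].
have x0' : 0 < 1 - x by rewrite subr_gt0.
have a0' : 0 < 1 - a by rewrite subr_gt0.
have p : 0 < x `^ b * a by rewrite mulr_gt0 ?powR_gt0.
have q : 0 < (1 - x) `^ b * (1 - a) by rewrite mulr_gt0 ?powR_gt0.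
rewrite /logit /biased_update.
set P := x `^ b * a in p *; set Q := (1 - x) `^ b * (1 - a) in q *.
have pq : 0 < P + Q by rewrite addr_gt0.
have -> : 1 - P / (P + Q) = Q / (P + Q) by field; rewrite gt_eqF.
rewrite !ln_div ?posrE // /P /Q !lnM ?posrE ?powR_gt0 // !ln_powR.
ring.
Qed.

Lemma biased_update_le x1 x2 a1 a2 : 0 <= b ->
  0 < x1 -> x1 <= x2 -> x2 < 1 -> 0 < a1 -> a1 <= a2 -> a2 < 1 ->
  biased_update x1 a1 <= biased_update x2 a2.
Proof.
move=> b0 x10 x12 x21 a10 a12 a21.
have x1r : 0 < x1 < 1 by apply/andP; split; lra.
have x2r : 0 < x2 < 1 by apply/andP; split; lra.
have a1r : 0 < a1 < 1 by apply/andP; split; lra.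
have a2r : 0 < a2 < 1 by apply/andP; split; lra.
rewrite -ler_logit ?biased_update_in01 // !logit_biased_update //.
by rewrite lerD ?ler_wpM2l // ler_logit.
Qed.

Lemma biased_update_gt_half x a : 0 < b -> 2^-1 < x < 1 -> 2^-1 <= a < 1 ->
  2^-1 < biased_update x a.
Proof.
move=> b0 /andP[x0 x1] /andP[a0 a1].
have xr : 0 < x < 1 by apply/andP; split; lra.
have ar : 0 < a < 1 by apply/andP; split; lra.
rewrite -logit_gt0 ?biased_update_in01 // logit_biased_update //.
apply: ltr_pwDl; first by rewrite mulr_gt0 // logit_gt0 //; lra.
by rewrite -logit_half ler_logit //; apply/andP; split; lra.
Qed.

Lemma biased_update_compl x a : 0 < x < 1 -> 0 < a < 1 ->
  biased_update (1 - x) (1 - a) = 1 - biased_update x a.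
Proof.
move=> /andP[x0 x1] /andP[a0 a1].
have p : 0 < x `^ b * a by rewrite mulr_gt0 ?powR_gt0.
have q : 0 < (1 - x) `^ b * (1 - a) by rewrite mulr_gt0 ?powR_gt0 ?subr_gt0.
by rewrite /biased_update !subKr; field; rewrite gt_eqF // addr_gt0.
Qed.

End BiasedUpdate.

Section ChordSlope.
Context {R : realType}.
Variables f df : R -> R.
Hypothesis f0 : f 0 = 0.
Hypothesis f_derive : forall s : R, is_derive s 1 f (df s).
Hypothesis df_decr : forall u v : R, 0 <= u -> u < v -> df v < df u.

Lemma chord_slope_decr (s1 s2 : R) : 0 < s1 -> s1 < s2 -> f s2 / s2 < f s1 / s1.
Proof.
move=> s1_gt0 s12.
have f_cont a c : {within `[a, c], continuous f}.
  by apply: derivable_within_continuous => s _; have [] := f_derive s.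
have [c1 + E1] := MVT s1_gt0 (fun (s : R) _ => f_derive s) (f_cont 0 s1).
have [c2 + E2] := MVT s12 (fun (s : R) _ => f_derive s) (f_cont s1 s2).
rewrite !in_itv /= => /andP[s1c2 _] /andP[c1_gt0 c1s1].
have dfc : df c2 < df c1 by apply: df_decr; lra.
rewrite f0 !subr0 in E1.
rewrite ltr_pdivrMr ?(lt_trans s1_gt0) // mulrAC ltr_pdivlMr //.
have -> : f s2 = f s1 + df c2 * (s2 - s1) by rewrite -E2; ring.
rewrite E1; have : 0 < (df c1 - df c2) * ((s2 - s1) * s1) by rewrite !mulr_gt0 ?subr_gt0.
nra.
Qed.

End ChordSlope.

Section Psi.
Context {R : realType}.
Implicit Types m s c x : R.

(* [psi (1 + phi (h - 1)) (logit x)] is the logit of the neighbours' mean opinion at the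
   steady state [y = yfix phi h x] defined below. *)
Definition psi m s := ln (1 + m * expR s) - ln (m + expR s).

Definition psi_deriv m s := m * expR s / (1 + m * expR s) - expR s / (m + expR s).

Lemma psi0 m : psi m 0 = 0.
Proof. by rewrite /psi expR0 mulr1 [1 + m]addrC subrr. Qed.

Lemma is_derive_psi m s : 0 < m -> is_derive s 1 (psi m) (psi_deriv m s).
Proof.
move=> m0; have e0 := expR_gt0 s.
have -> : psi m = ((@ln R) \o (cst 1 + m \*: (@expR R))) - ((@ln R) \o (cst m + (@expR R))).
  by apply/funext => z; rewrite /psi.
apply: is_derive_eq.
apply: is_deriveB; apply: is_derive1_comp.
- by apply: is_derive1_ln; change (0 < 1 + m * expR s); nra.
- by apply: is_derive1_ln; change (0 < m + expR s); nra.
change ((1 + m * expR s)^-1 * (0 + m * expR s) - (m + expR s)^-1 * (0 + expR s) =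
  psi_deriv m s).
by rewrite !add0r mulrC [X in _ - X]mulrC.
Qed.

Lemma psi_slope_decr m s1 s2 : 1 < m -> 0 < s1 -> s1 < s2 ->
  psi m s2 / s2 < psi m s1 / s1.
Proof.
move=> m1; apply: (@chord_slope_decr _ (psi m) (psi_deriv m) (psi0 m)) => [s|a c a0 ac].
  by apply: is_derive_psi; lra.
have E1 : 1 <= expR a by rewrite -expR0 ler_expR.
have E12 : expR a < expR c by rewrite ltr_expR.
rewrite /psi_deriv; set u := expR a in E1 E12 *; set v := expR c in E12 *.
rewrite -subr_gt0.
have -> : m * u / (1 + m * u) - u / (m + u) - (m * v / (1 + m * v) - v / (m + v)) =
    (m * m - 1) * m * (v - u) * (u * v - 1) /
    ((1 + m * u) * (m + u) * (1 + m * v) * (m + v)).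
  by field; repeat split; nra.
by apply: divr_gt0; repeat apply: mulr_gt0; nra.
Qed.

Lemma psi_logit c x : 0 < c -> 0 < x < 1 ->
  psi (1 + c) (logit x) = ln (1 + c * x) - ln (1 + c - c * x).
Proof.
move=> c0 /andP[x0 x1].
have x0' : 0 < 1 - x by rewrite subr_gt0.
rewrite /psi /logit expRD expRN !lnK ?posrE //.
have -> : 1 + (1 + c) * (x * (1 - x)^-1) = (1 + c * x) / (1 - x) by field; lra.
have -> : 1 + c + x * (1 - x)^-1 = (1 + c - c * x) / (1 - x) by field; lra.
rewrite !ln_div ?posrE //; [ring | nra | nra].
Qed.

Lemma gfun_fixpoint b c x : 0 < c -> 2^-1 < x < 1 -> gfun x b = c ->
  psi (1 + c) (logit x) = (1 - b) * logit x.
Proof.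
move=> c0 /andP[x1 x2].
have x0 : 0 < x by lra.
have x0' : 0 < 1 - x by lra.
rewrite /gfun ifF; last by apply/negbTE; rewrite gt_eqF.
set A := x `^ (1 - b); set B := (1 - x) `^ (1 - b).
have A0 : 0 < A by rewrite powR_gt0.
have B0 : 0 < B by rewrite powR_gt0.
have [->|den0 gc] := eqVneq (x * B - (1 - x) * A) 0.
  by rewrite invr0 mulr0 => c00; lra.
have : A * (1 + c - c * x) = B * (1 + c * x) by rewrite -gc; field.
move=> /(congr1 (@ln R)); rewrite !lnM ?posrE //; [|nra|nra].
rewrite /A /B !ln_powR psi_logit ?x0 //= /logit; lra.
Qed.

End Psi.

Section IslandMaps.
Context {R : realType}.
Implicit Types x y : R.

(* The mean of [y] over the neighbours of a node of V1 when V1 holds [y] and V2 holds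
   [1 - y]; [h] stands for the homophily p_s / p_d. *)
Definition nbr_mean h y := (h * y + (1 - y)) / (h + 1).
Definition xmap b h x y := biased_update b x (nbr_mean h y).
Definition ymap phi h x y := phi * x + (1 - phi) * nbr_mean h y.
Definition yfix phi h x := (phi * (h + 1) * x + 1 - phi) / (phi * h + 2 - phi).

Variables b phi h : R.
Hypothesis phi01 : 0 < phi < 1.
Hypothesis h_gt1 : 1 < h.

(* [lra] and [nra] ignore section hypotheses, hence the local copies [have h1 := h_gt1]. *)

Lemma nbr_mean_in01 y : 0 <= y <= 1 -> 0 < nbr_mean h y < 1.
Proof.
move=> /andP[y0 y1]; have h1 := h_gt1; rewrite /nbr_mean.
by apply/andP; split; [rewrite divr_gt0; nra | rewrite ltr_pdivrMr; nra].
Qed.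

Lemma nbr_mean_ge_half y : 2^-1 <= y -> 2^-1 <= nbr_mean h y.
Proof. by move=> y_ge; have h1 := h_gt1; rewrite /nbr_mean ler_pdivlMr; nra. Qed.

Lemma nbr_mean_le y1 y2 : y1 <= y2 -> nbr_mean h y1 <= nbr_mean h y2.
Proof. by move=> y12; have h1 := h_gt1; rewrite /nbr_mean ler_pM2r ?invr_gt0; nra. Qed.

Lemma nbr_mean_compl y : nbr_mean h (1 - y) = 1 - nbr_mean h y.
Proof. by have h1 := h_gt1; rewrite /nbr_mean; field; rewrite gt_eqF //; lra. Qed.

Lemma nbr_mean_cvg (v : nat -> R) (y : R) : v @ \oo --> y ->
  (fun t => nbr_mean h (v t)) @ \oo --> nbr_mean h y.
Proof.
move=> vy; apply: cvgM; last exact: cvg_cst.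
by apply: cvgD; [apply: cvgM => //; exact: cvg_cst | apply: cvgB => //; exact: cvg_cst].
Qed.

Lemma xmap_le x1 x2 y1 y2 : 0 <= b -> 0 < x1 -> x1 <= x2 -> x2 < 1 ->
  0 <= y1 -> y1 <= y2 -> y2 <= 1 -> xmap b h x1 y1 <= xmap b h x2 y2.
Proof.
move=> b0 x10 x12 x21 y10 y12 y21.
have /andP[a10 _] : 0 < nbr_mean h y1 < 1 by apply: nbr_mean_in01; lra.
have /andP[_ a21] : 0 < nbr_mean h y2 < 1 by apply: nbr_mean_in01; lra.
by apply: biased_update_le => //; exact: nbr_mean_le.
Qed.

Lemma ymap_le x1 x2 y1 y2 : x1 <= x2 -> y1 <= y2 -> ymap phi h x1 y1 <= ymap phi h x2 y2.
Proof.
move=> x12 /nbr_mean_le a12; case/andP: phi01 => p0 p1.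
by rewrite lerD // ler_wpM2l //; lra.
Qed.

Lemma xmap_range x y : 0 < b -> 2^-1 < x < 1 -> 2^-1 <= y <= 1 ->
  2^-1 < xmap b h x y < 1.
Proof.
move=> b0 /andP[x0 x1] /andP[y0 y1].
have ar : 0 < nbr_mean h y < 1 by apply: nbr_mean_in01; lra.
have xr : 0 < x < 1 by apply/andP; split; lra.
have /andP[_ -> ] := biased_update_in01 b xr ar.
rewrite andbT biased_update_gt_half //; first by apply/andP; split.
by case/andP: ar => _ ->; rewrite nbr_mean_ge_half.
Qed.

Lemma ymap_range x y : 2^-1 < x < 1 -> 2^-1 <= y <= 1 -> 2^-1 < ymap phi h x y <= 1.
Proof.
move=> /andP[x0 x1] /andP[y0 y1]; case/andP: phi01 => p0 p1.
have /andP[_ a1] : 0 < nbr_mean h y < 1 by apply: nbr_mean_in01; lra.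
have a_ge := nbr_mean_ge_half y0.
by rewrite /ymap; apply/andP; split; nra.
Qed.

Lemma ymap_cvg (u v : nat -> R) (x y : R) : u @ \oo --> x -> v @ \oo --> y ->
  (fun t => ymap phi h (u t) (v t)) @ \oo --> ymap phi h x y.
Proof.
move=> ux vy; apply: cvgD; apply: cvgM; try exact: cvg_cst; first exact: ux.
exact: nbr_mean_cvg.
Qed.

Lemma xmap_compl x y : 0 < x < 1 -> 0 <= y <= 1 ->
  xmap b h (1 - x) (1 - y) = 1 - xmap b h x y.
Proof.
by move=> x01 y01; rewrite /xmap nbr_mean_compl biased_update_compl ?nbr_mean_in01.
Qed.

Lemma ymap_compl x y : ymap phi h (1 - x) (1 - y) = 1 - ymap phi h x y.
Proof. by rewrite /ymap nbr_mean_compl; ring. Qed.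

Lemma yfix_range x : 2^-1 <= x -> 2^-1 <= yfix phi h x <= x.
Proof.
move=> x0; case/andP: phi01 => p0 p1; have h1 := h_gt1.
have d0 : 0 < phi * h + 2 - phi by nra.
have : 0 <= phi * (h + 1) * (x - 2^-1) by rewrite !mulr_ge0 //; lra.
by rewrite /yfix ler_pdivlMr // ler_pdivrMr // => ?; apply/andP; split; nra.
Qed.

Lemma ymap_fixE x y : ymap phi h x y = y <-> y = yfix phi h x.
Proof.
case/andP: phi01 => p0 p1; have h1 := h_gt1.
have d0 : phi * h + 2 - phi != 0 by rewrite gt_eqF //; nra.
have h0 : h + 1 != 0 by rewrite gt_eqF //; lra.
have E z : ymap phi h x z - z = (yfix phi h x - z) * ((phi * h + 2 - phi) / (h + 1)).
  by rewrite /ymap /yfix /nbr_mean; field; apply/andP.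
split => [/eqP|->]; last by apply/eqP; rewrite -subr_eq0 E subrr mul0r.
rewrite -subr_eq0 E mulf_eq0 subr_eq0 => /orP[/eqP <- //|].
by rewrite mulf_eq0 invr_eq0 (negbTE d0) (negbTE h0).
Qed.

Lemma nbr_mean_yfix x :
  nbr_mean h (yfix phi h x) = (1 + phi * (h - 1) * x) / (2 + phi * (h - 1)).
Proof.
case/andP: phi01 => p0 p1; have h1 := h_gt1.
have d1 : 2 + phi * (h - 1) != 0 by rewrite gt_eqF //; nra.
have h0 : h + 1 != 0 by rewrite gt_eqF //; lra.
rewrite /nbr_mean /yfix (_ : phi * h + 2 - phi = 2 + phi * (h - 1)); last by ring.
by field; rewrite d1 h0.
Qed.

Lemma logit_nbr_mean_yfix x : 0 < x < 1 ->
  logit (nbr_mean h (yfix phi h x)) = psi (1 + phi * (h - 1)) (logit x).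
Proof.
move=> /andP[x0 x1]; case/andP: phi01 => p0 p1; have h1 := h_gt1.
have c0 : 0 < phi * (h - 1) by rewrite mulr_gt0 // subr_gt0.
rewrite psi_logit ?x0 // nbr_mean_yfix /logit.
set c := phi * (h - 1) in c0 *.
have -> : 1 - (1 + c * x) / (2 + c) = (1 + c - c * x) / (2 + c) by field; lra.
by rewrite !ln_div ?posrE; [ring | nra | lra | nra | lra].
Qed.

End IslandMaps.

Section SubSolution.
Context {R : realType}.
Variables b phi h xh : R.
Hypothesis phi01 : 0 < phi < 1.
Hypothesis h_gt1 : 1 < h.
Hypothesis xh_range : 2^-1 < xh < 1.
Hypothesis xh_fix : psi (1 + phi * (h - 1)) (logit xh) = (1 - b) * logit xh.

Lemma psi_gt_below_fixpoint x : 2^-1 < x < xh ->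
  (1 - b) * logit x < psi (1 + phi * (h - 1)) (logit x).
Proof.
move=> /andP[x0 x1]; move: phi01 h_gt1 xh_range => /andP[p0 p1] h1 /andP[xh0 xh1].
have xr : 0 < x < 1 by apply/andP; split; lra.
have xhr : 0 < xh < 1 by apply/andP; split; lra.
have lx0 : 0 < logit x by rewrite logit_gt0.
have lxh : logit x < logit xh by rewrite ltr_logit.
have m1 : 1 < 1 + phi * (h - 1) by rewrite ltrDl mulr_gt0 // subr_gt0.
have := psi_slope_decr m1 lx0 lxh.
by rewrite xh_fix mulfK ?gt_eqF ?(lt_trans lx0) // ltr_pdivlMr.
Qed.

Lemma xmap_yfix_gt x : 0 < b -> 2^-1 < x < xh -> x < xmap b h x (yfix phi h x).
Proof.
move=> b0 xr; have psi_gt := psi_gt_below_fixpoint xr.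
move: xr xh_range => /andP[x0 x1] /andP[_ xh1].
have x01 : 0 < x < 1 by apply/andP; split; lra.
have /andP[y0 y1] := yfix_range phi01 h_gt1 (ltW x0).
have a01 : 0 < nbr_mean h (yfix phi h x) < 1.
  by apply: nbr_mean_in01 => //; apply/andP; split; lra.
rewrite -ltr_logit ?biased_update_in01 // logit_biased_update //.
by rewrite logit_nbr_mean_yfix //; lra.
Qed.

End SubSolution.

Section EventuallyMonotone.
Context {R : realType}.
Variables u v : nat -> R.
Hypothesis u_up : forall t, u t <= u t.+1 -> v t <= v t.+1 -> u t.+1 <= u t.+2.
Hypothesis u_down : forall t, u t.+1 <= u t -> v t.+1 <= v t -> u t.+2 <= u t.+1.
Hypothesis v_up : forall t, u t.+1 <= u t.+2 -> v t <= v t.+1 -> v t.+1 <= v t.+2.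
Hypothesis v_down : forall t, u t.+2 <= u t.+1 -> v t.+1 <= v t -> v t.+2 <= v t.+1.

Let up t := u t <= u t.+1 /\ v t <= v t.+1.
Let down t := u t.+1 <= u t /\ v t.+1 <= v t.

Lemma eventually_monotone T0 :
  exists2 T, (T0 < T)%N & monotone_from u T /\ monotone_from v T.
Proof.
have [[T [lt_T0T [upT|downT]]]|no_pair] :=
  pselect (exists T, (T0 < T)%N /\ (up T \/ down T)).
- exists T => //; suff H : forall t, (T <= t)%N -> up t by split; left => t /H[].
  apply: ind_from => // t _ [ut vt]; have ut1 := u_up ut vt; split => //; exact: v_up.
- exists T => //; suff H : forall t, (T <= t)%N -> down t by split; right => t /H[].
  apply: ind_from => // t _ [ut vt]; have ut1 := u_down ut vt; split => //; exact: v_down.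
(* Otherwise the two sequences move in opposite directions at every time after T0. *)
have no_up t : (T0 < t)%N -> ~ up t.
  by move=> lt ?; apply: no_pair; exists t; split; [|left].
have no_down t : (T0 < t)%N -> ~ down t.
  by move=> lt ?; apply: no_pair; exists t; split; [|right].
exists T0.+1 => //.
have [u1|u1] := leP (u T0.+1) (u T0.+2); have [v1|v1] := leP (v T0.+1) (v T0.+2).
- by case: (no_up T0.+1).
- suff H : forall t, (T0 < t)%N -> u t <= u t.+1 /\ v t.+1 <= v t.
    by split; [left|right] => t /H[].
  apply: ind_from => [|t lt [ut vt]]; first by split => //; exact: ltW.
  have ut1 : u t.+1 <= u t.+2.
    rewrite leNgt; apply/negP => /ltW ut1; apply: (no_down t.+1); first exact: ltnW.
    by split => //; exact: v_down.
  split => //; rewrite leNgt; apply/negP => /ltW vt1.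
  by apply: (no_up t.+1) => //; exact: ltnW.
- suff H : forall t, (T0 < t)%N -> u t.+1 <= u t /\ v t <= v t.+1.
    by split; [right|left] => t /H[].
  apply: ind_from => [|t lt [ut vt]]; first by split => //; exact: ltW.
  have ut1 : u t.+2 <= u t.+1.
    rewrite leNgt; apply/negP => /ltW ut1; apply: (no_up t.+1); first exact: ltnW.
    by split => //; exact: v_up.
  split => //; rewrite leNgt; apply/negP => /ltW vt1.
  by apply: (no_down t.+1) => //; exact: ltnW.
- by case: (no_down T0.+1) => //; split; exact: ltW.
Qed.

End EventuallyMonotone.

Lemma monotone_from_cvg {R : realType} (u : nat -> R) (N : nat) (m M : R) :
  monotone_from u N -> (forall t, m <= u t <= M) -> exists l : R, u @ \oo --> l.
Proof.
move=> mono bnd; suff : cvgn (fun t => u (t + N)%N).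
  by case/cvg_ex => /= l; rewrite cvg_shiftn => ul; exists l.
case: mono => mono.
  apply: nondecreasing_is_cvgn.
    by apply/nondecreasing_seqP => t; rewrite addSn; apply: mono; exact: leq_addl.
  by exists M => _ [t _ <-]; case/andP: (bnd (t + N)%N).
apply: nonincreasing_is_cvgn.
  by apply/nonincreasing_seqP => t; rewrite addSn; apply: mono; exact: leq_addl.
by exists m => _ [t _ <-]; case/andP: (bnd (t + N)%N).
Qed.

Section IslandSystem.
Context {R : realType}.
Variables (b phi h : R) (X Y : nat -> R).
Hypothesis b_gt0 : 0 < b.
Hypothesis phi01 : 0 < phi < 1.
Hypothesis h_gt1 : 1 < h.
Hypothesis X_step : forall t, X t.+1 = xmap b h (X t) (Y t).
Hypothesis Y_step : forall t, Y t.+1 = ymap phi h (X t.+1) (Y t).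
Hypothesis X0 : 2^-1 < X 0 < 1.
Hypothesis Y0 : 2^-1 <= Y 0 <= 1.

Lemma island_range t : 2^-1 < X t < 1 /\ 2^-1 <= Y t <= 1.
Proof.
elim: t => [|t [xt yt]]; first by split.
have xt1 : 2^-1 < X t.+1 < 1 by rewrite X_step xmap_range.
split => //; rewrite Y_step.
by have /andP[/ltW -> ->] := ymap_range phi01 h_gt1 xt1 yt.
Qed.

Lemma Y_succ_gt_half t : 2^-1 < Y t.+1.
Proof.
have [_ yt] := island_range t; have [xt1 _] := island_range t.+1.
by rewrite Y_step; case/andP: (ymap_range phi01 h_gt1 xt1 yt).
Qed.

Lemma X_succ_le s1 s2 : X s1 <= X s2 -> Y s1 <= Y s2 -> X s1.+1 <= X s2.+1.
Proof.
have [/andP[x1 _] /andP[y1 _]] := island_range s1.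
have [/andP[_ x2] /andP[_ y2]] := island_range s2.
by move=> le_x le_y; rewrite !X_step xmap_le ?(ltW b_gt0) //; lra.
Qed.

Lemma Y_succ_le s1 s2 : X s1.+1 <= X s2.+1 -> Y s1 <= Y s2 -> Y s1.+1 <= Y s2.+1.
Proof. by move=> le_x le_y; rewrite !Y_step ymap_le. Qed.

Lemma island_eventually_monotone T0 :
  exists2 T, (T0 < T)%N & monotone_from X T /\ monotone_from Y T.
Proof.
by apply: eventually_monotone => t; [exact: X_succ_le | exact: X_succ_le |
  exact: Y_succ_le | exact: Y_succ_le].
Qed.

Lemma island_barrier xw T : 2^-1 < xw < 1 -> xw <= xmap b h xw (yfix phi h xw) ->
  xw <= X T -> xw <= Y T -> forall t, (T <= t)%N -> xw <= X t /\ yfix phi h xw <= Y t.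
Proof.
move=> /andP[xw0 xw1] xw_sub xwX xwY.
have /andP[yw0 yw1] := yfix_range phi01 h_gt1 (ltW xw0).
apply: ind_from => [|t _ [xt yt]]; first by split => //; exact: le_trans yw1 xwY.
have [/andP[_ x1] /andP[_ y1]] := island_range t.
have xt1 : xw <= X t.+1.
  by rewrite X_step (le_trans xw_sub) // xmap_le ?(ltW b_gt0) //; lra.
split => //; rewrite Y_step -(proj2 (ymap_fixE phi01 h_gt1 xw _) erefl).
exact: ymap_le.
Qed.

Lemma island_limit xs ys : X @ \oo --> xs -> Y @ \oo --> ys -> 0 < xs < 1 ->
  ys = yfix phi h xs /\ (1 - b) * logit xs = psi (1 + phi * (h - 1)) (logit xs).
Proof.
move=> Xxs Yys xs01.
have ys01 : 0 <= ys <= 1.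
  apply/andP; split; [apply: (cvgr_to_ge Yys) | apply: (cvgr_to_le Yys)];
  by exists 0%N => // t _; have [_ /andP[? ?]] := island_range t; lra.
have ys_fix : ymap phi h xs ys = ys.
  suff L : Y @ \oo --> ymap phi h xs ys by exact: cvg_unique _ L Yys.
  rewrite -(cvg_shiftS Y); under eq_fun do rewrite Y_step.
  by apply: ymap_cvg => //; rewrite (cvg_shiftS X).
have ys_eq := proj1 (ymap_fixE phi01 h_gt1 _ _) ys_fix.
split => //; suff : logit xs = b * logit xs + logit (nbr_mean h ys).
  by rewrite ys_eq logit_nbr_mean_yfix //; lra.
have a01 : 0 < nbr_mean h ys < 1 by exact: nbr_mean_in01.
have logit_step t : logit (X t.+1) = b * logit (X t) + logit (nbr_mean h (Y t)).
  have [/andP[? ?] /andP[? ?]] := island_range t.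
  rewrite X_step logit_biased_update //; first by apply/andP; split; lra.
  by apply: nbr_mean_in01 => //; apply/andP; split; lra.
suff L : (fun t => logit (X t)) @ \oo --> b * logit xs + logit (nbr_mean h ys).
  exact: cvg_unique _ (logit_cvg xs01 Xxs) L.
rewrite -(cvg_shiftS (fun t => logit (X t))) /=; under eq_fun do rewrite logit_step.
apply: cvgD; first by apply: cvgM; [exact: cvg_cst | exact: logit_cvg].
by apply: logit_cvg => //; exact: nbr_mean_cvg.
Qed.

Theorem island_cvg xh T0 : xh < 1 -> gfun xh b = phi * (h - 1) ->
  (forall t, (T0 <= t)%N -> X t < xh) ->
  exists Tt, [/\ (T0 < Tt)%N, monotone_from X Tt, monotone_from Y Tt,
    X @ \oo --> xh & Y @ \oo --> yfix phi h xh].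
Proof.
move=> xh1 xh_gfun below; move: phi01 h_gt1 => /andP[p0 p1] h1.
have [/andP[XT0 _] _] := island_range T0.
have xhr : 2^-1 < xh < 1 by rewrite (lt_trans XT0) ?below.
have c0 : 0 < phi * (h - 1) by rewrite mulr_gt0 // subr_gt0.
have xh_fix := gfun_fixpoint c0 xhr xh_gfun.
(* From time T0.+1 on, X and Y both exceed 1/2 while X stays below xh. *)
set xw := Num.min (X T0.+1) (Y T0.+1).
have xwX : xw <= X T0.+1 by rewrite ge_min lexx.
have xwY : xw <= Y T0.+1 by rewrite ge_min lexx orbT.
have [/andP[XT _] _] := island_range T0.+1.
have xw_gt : 2^-1 < xw by rewrite lt_min XT Y_succ_gt_half.
have xw_lt : xw < xh by rewrite (le_lt_trans xwX) ?below.
have xw_sub : xw <= xmap b h xw (yfix phi h xw).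
  by rewrite ltW // (xmap_yfix_gt phi01 h_gt1 xhr xh_fix) // xw_gt.
have xw_le t : (T0.+1 <= t)%N -> xw <= X t.
  by move=> /(island_barrier _ xw_sub xwX xwY) [] //; rewrite xw_gt (lt_trans xw_lt).
have [Tt lt_T0Tt [mX mY]] := island_eventually_monotone T0.
have bnd t : 0 <= X t <= 1 /\ 0 <= Y t <= 1.
  by have [/andP[? ?] /andP[? ?]] := island_range t; split; apply/andP; split; lra.
have [xs Xxs] := monotone_from_cvg mX (fun t => (bnd t).1).
have [ys Yys] := monotone_from_cvg mY (fun t => (bnd t).2).
have xs_ge : xw <= xs by apply: (cvgr_to_ge Xxs); exists T0.+1 => // t /xw_le.
have xs_le : xs <= xh by apply: (cvgr_to_le Xxs); exists T0 => // t /below /ltW.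
have xs01 : 0 < xs < 1 by apply/andP; split; lra.
have [ys_eq xs_fix] := island_limit Xxs Yys xs01.
have xs_eq : xs = xh.
  apply/eqP; rewrite eq_le xs_le leNgt; apply/negP => xs_lt.
  have xs_range : 2^-1 < xs < xh by rewrite xs_lt (lt_le_trans xw_gt).
  by have := psi_gt_below_fixpoint phi01 h_gt1 xhr xh_fix xs_range; rewrite xs_fix ltxx.
by exists Tt; split; rewrite // -xs_eq -?ys_eq.
Qed.

End IslandSystem.

Section TwoIsland.
Context {R : realType} {T : finType}.
Variables (e : rel T) (V1 : {set T}) (n ks kd : nat) (h : R).
Hypothesis HG : two_island e V1 n ks kd.
Hypothesis kd_gt0 : (0 < kd)%N.
Hypothesis h_gt1 : 1 < h.
Hypothesis ks_eq : ks%:R = h * kd%:R.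

Definition mirror (a : R) (j : T) : R := if j \in V1 then a else 1 - a.

Lemma ssum_mirror y j : ssum e (mirror y) j =
  #|[set k in V1 | e j k]|%:R * y + #|[set k in ~: V1 | e j k]|%:R * (1 - y).
Proof.
have part (A : {set T}) c : {in A, forall k, mirror y k = c} ->
    \sum_(k in A) mirror y k = #|A|%:R * c.
  by move=> Ac; rewrite (eq_bigr _ Ac) sumr_const mulr_natl.
rewrite /ssum (bigID (mem V1)) /=; congr (_ + _).
  rewrite -part => [|k]; last by rewrite inE /mirror => /andP[->].
  by apply: eq_bigl => k; rewrite !inE andbC.
rewrite -part => [|k]; last by rewrite !inE /mirror => /andP[/negbTE ->].
by apply: eq_bigl => k; rewrite !inE andbC.
Qed.

Lemma deg_two_island j :
  deg e R j = #|[set k in V1 | e j k]|%:R + #|[set k in ~: V1 | e j k]|%:R.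
Proof.
rewrite /deg -natrD -(cardsID V1 [set k | e j k]).
by congr (_ + _)%:R; apply: eq_card => k; rewrite !inE andbC.
Qed.

Lemma deg_two_island_gt0 j : 0 < deg e R j.
Proof.
case: HG => _ _ _ HV1 HV2; rewrite deg_two_island -natrD ltr0n addn_gt0.
case: (boolP (j \in V1)) => jV; first by have [_ ->] := HV1 j jV; rewrite kd_gt0 orbT.
have /HV2[_ ->] : j \in ~: V1 by rewrite inE.
by rewrite kd_gt0.
Qed.

Lemma nbr_average_mirror y j :
  ssum e (mirror y) j / deg e R j = nbr_mean h (mirror y j).
Proof.
case: HG => _ _ _ HV1 HV2.
have kd0 : 0 < kd%:R :> R by rewrite ltr0n.
have h1 := h_gt1.
have nz : (h + 1 != 0) && (h * kd%:R + kd%:R != 0) by rewrite !gt_eqF //; nra.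
rewrite ssum_mirror deg_two_island /mirror; case: ifP => jV.
  by have [-> ->] := HV1 j jV; rewrite ks_eq /nbr_mean; field.
have /HV2[-> ->] : j \in ~: V1 by rewrite inE jV.
by rewrite ks_eq /nbr_mean; field; rewrite [kd%:R + _]addrC.
Qed.

Lemma dual_dynamics_mirror (b phi : R) (x y : nat -> T -> R) (X Y : nat -> R) :
  dual_dynamics e phi b x y ->
  (forall t, X t.+1 = xmap b h (X t) (Y t)) ->
  (forall t, Y t.+1 = ymap phi h (X t.+1) (Y t)) ->
  (forall t, 0 < X t < 1 /\ 0 <= Y t <= 1) ->
  (forall j, j \in V1 -> x 0%N j = X 0%N /\ y 0%N j = Y 0%N) ->
  (forall j, j \in ~: V1 -> x 0%N j = 1 - X 0%N /\ y 0%N j = 1 - Y 0%N) ->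
  forall t, x t =1 mirror (X t) /\ y t =1 mirror (Y t).
Proof.
move=> dyn X_step Y_step rng init1 init2.
elim=> [|t [/funext xt /funext yt]].
  by split=> j; rewrite /mirror; case: ifP => jV;
    [exact: (init1 j jV).1 | apply: (init2 j _).1; rewrite inE jV |
     exact: (init1 j jV).2 | apply: (init2 j _).2; rewrite inE jV].
have [X01 Y01] := rng t.
have avg j : ssum e (y t) j / deg e R j = nbr_mean h (mirror (Y t) j).
  by rewrite yt nbr_average_mirror.
have x_step j : x t.+1 j = mirror (X t.+1) j.
  have dj : deg e R j != 0 := lt0r_neq0 (deg_two_island_gt0 j).
  have /= [-> _] := dyn t j; rewrite (biased_update_scale _ _ _ dj).
  by rewrite avg xt X_step /mirror; case: ifP => // _; rewrite -xmap_compl.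
split => // j; have /= [_ ->] := dyn t j.
by rewrite x_step avg Y_step /mirror; case: ifP => // _; rewrite -ymap_compl.
Qed.

End TwoIsland.

Theorem lemmaB6 (R : realType) (T : finType) (e : rel T) (V1 : {set T})
  (n ks kd : nat) (ps pd : R)
  (Hn : (0 < n)%N) (Hks : (0 < ks)%N) (Hkd : (0 < kd)%N)
  (Hps : 0 < ps < 1) (Hpd : 0 < pd < 1) (Hpspd : pd < ps)
  (Hks_def : n%:R * ps = ks%:R) (Hkd_def : n%:R * pd = kd%:R)
  (HG : two_island e V1 n ks kd)
  (phi b x0 y0 : R) (x y : nat -> T -> R)
  (Hphi : 0 < phi < 1)
  (Hb : 2 / (phi * (ps / pd - 1) + 2) <= b < 1)
  (Hx0 : 2^-1 < x0 < 1) (Hy0 : 2^-1 <= y0 <= x0)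
  (Hinit1 : forall j, j \in V1 -> x 0%N j = x0 /\ y 0%N j = y0)
  (Hinit2 : forall j, j \in ~: V1 -> x 0%N j = 1 - x0 /\ y 0%N j = 1 - y0)
  (Hdyn : dual_dynamics e phi b x y)
  (xh : R) (Hxh : 2^-1 <= xh < 1) (Hxh_sol : gfun xh b = phi * (ps / pd - 1))
  (i : T) (Hi : i \in V1) (T0 : nat) (HT0 : (0 < T0)%N)
  (Hbelow : forall t, (T0 <= t)%N -> x t i < xh) :
  exists Tt : nat, (T0 < Tt)%N /\
    monotone_from (fun t => x t i) Tt /\ monotone_from (fun t => y t i) Tt /\
    (fun t => x t i) @ \oo --> xh /\
    (fun t => y t i) @ \oo -->
      (phi * (ps / pd + 1) * xh + 1 - phi) / (phi * (ps / pd) + 2 - phi).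
Proof.
set h := ps / pd.
have /andP[ps0 _] := Hps; have /andP[pd0 _] := Hpd; have /andP[phi0 _] := Hphi.
have h_gt1 : 1 < h by rewrite ltr_pdivlMr // mul1r.
have ks_eq : ks%:R = h * kd%:R by rewrite -Hks_def -Hkd_def /h mulrCA divfK ?gt_eqF.
have b_gt0 : 0 < b.
  case/andP: Hb => + _; apply: lt_le_trans.
  by rewrite divr_gt0 // addr_gt0 // mulr_gt0 // subr_gt0.
pose step (p : R * R) := let x' := xmap b h p.1 p.2 in (x', ymap phi h x' p.2).
pose X t := (iter t step (x0, y0)).1; pose Y t := (iter t step (x0, y0)).2.
have X_step t : X t.+1 = xmap b h (X t) (Y t) by [].
have Y_step t : Y t.+1 = ymap phi h (X t.+1) (Y t) by [].
have Y0 : 2^-1 <= Y 0%N <= 1.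
  by move: Hx0 Hy0 => /andP[_ x01] /andP[-> /le_trans]; apply; exact: ltW.
have rng t : 0 < X t < 1 /\ 0 <= Y t <= 1.
  have [/andP[? ?] /andP[? ?]] := island_range b_gt0 Hphi h_gt1 X_step Y_step Hx0 Y0 t.
  by split; apply/andP; split; lra.
have sym := dual_dynamics_mirror HG Hkd h_gt1 ks_eq Hdyn X_step Y_step rng Hinit1 Hinit2.
have xE t : x t i = X t by rewrite (sym t).1 /mirror Hi.
have yE t : y t i = Y t by rewrite (sym t).2 /mirror Hi.
have below t : (T0 <= t)%N -> X t < xh by rewrite -xE; exact: Hbelow.
have /andP[_ xh1] := Hxh.
have [Tt [? ? ? ? ?]] := island_cvg b_gt0 Hphi h_gt1 X_step Y_step Hx0 Y0 xh1 Hxh_sol below.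
by exists Tt; rewrite (funext xE) (funext yE); do !split.
Qed.
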